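(* For every Weyl element $w\in\mathbf{W}$ there is $z_w\in\mathcal{Z}$ such that $d_{w_0w}=w_0d_ww_0d_{w_0}z_w$.
   Context: $F$ is a non-archimedean local field with uniformizer $\varpi$. $G=GL_n(F)$ with center $\mathcal{Z}$ (scalar matrices). $\mathbf{W}$ is the Weyl group of permutation matrices and $w_0$ its longest element. Roots $\alpha_{i,j}(\mathrm{diag}(t))=t_i/t_j$, $\Phi^+=\{\alpha_{i,j}:i<j\}$, $\Phi^-=\{\alpha_{i,j}:i>j\}$, $\Delta=\{\alpha_{i,i+1}\}$, $(w\alpha)(t)=\alpha(w^{-1}tw)$, $\langle\alpha_{i,j},\bar{k}\rangle=k_i-k_j$. For $\bar{k}\in\mathbb{Z}^n$, $\varpi^{\bar{k}}=\mathrm{diag}(\varpi^{k_1},\dots,\varpi^{k_n})$. For $w\in\mathbf{W}$, $d_w$ is the element $\varpi^{\bar{k}}$ with $k_n=0$ and, for all $\alpha\in\Delta$, $\langle\alpha,\bar{k}\rangle=0$ if $w^{-1}\alpha\in\Phi^+$ and $\langle\alpha,\bar{k}\rangle=-1$ if $w^{-1}\alpha\in\Phi^-$. *)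

From HB Require Import structures.
From mathcomp Require Import all_boot all_order all_algebra all_fingroup.
Set Implicit Arguments. Unset Strict Implicit. Unset Printing Implicit Defensive.
Import Order.TTheory GRing.Theory Num.Theory.
Local Open Scope ring_scope.

Section Defs.
Variables (F : fieldType) (n : nat).

Definition varpi_pow (varpi : F) (k : 'I_n -> int) : 'M[F]_n :=
  diag_mx (\row_i (varpi ^ (k i))).

(* The longest Weyl element w_0, as a permutation: i |-> n-1-i.
   Its permutation matrix perm_mx w0perm is the antidiagonal matrix. *)
Definition w0perm : 'S_n := perm (@rev_ord_inj n).

(* Weyl elements are permutation matrices perm_mx s, (perm_mx s) i j = (s i == j).
   For t diagonal, (perm_mx s) t (perm_mx s)^{-1} = diag(t_{s 1}, ..., t_{s n}),
   hence (w^{-1} alpha_{i,j})(t) = alpha_{i,j}(w t w^{-1}) = alpha_{s i, s j}(t).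
   So w^{-1} alpha_{i,j} is positive iff s i < s j, negative iff s j < s i. *)
Definition inv_root_pos (s : 'S_n) (i j : 'I_n) : bool := (s i < s j)%N.
Definition inv_root_neg (s : 'S_n) (i j : 'I_n) : bool := (s j < s i)%N.

Definition pair_root (k : 'I_n -> int) (i j : 'I_n) : int := k i - k j.

(* k is the exponent vector of d_w for w = perm_mx s:
   k_n = 0, and for every simple root alpha_{i,i+1}:
   <alpha,k> = 0 if w^{-1} alpha > 0 and <alpha,k> = -1 if w^{-1} alpha < 0. *)
Definition is_d_exponent (s : 'S_n) (k : 'I_n -> int) : Prop :=
  (forall i : 'I_n, i.+1 = n -> k i = 0) /\
  (forall i j : 'I_n, nat_of_ord j = i.+1 ->
     (inv_root_pos s i j -> pair_root k i j = 0) /\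
     (inv_root_neg s i j -> pair_root k i j = -1)).

Definition is_d (varpi : F) (W D : 'M[F]_n) : Prop :=
  exists s : 'S_n, W = perm_mx s /\
  exists k : 'I_n -> int, D = varpi_pow varpi k /\ is_d_exponent s k.

End Defs.

(** Write [d_w = varpi^k].  At the simple root [alpha_{i,i+1}] the increment
    [k_i - k_{i+1}] is [-1] if [w i > w (i+1)] and [0] otherwise, so these
    increments determine [d_w] up to a central factor.  Conjugation by [w_0]
    reverses the coordinates, so with [a = w (w_0 i)] and [b = w (w_0 (i+1))]
    the increments at [alpha_{i,i+1}] of [d_{w_0 w}], of [w_0 d_w w_0] and of
    [d_{w_0}] are [-[b < a]], [[a < b]] and [-1].  As [a <> b], the first is
    the sum of the other two, so [d_{w_0 w}] and [w_0 d_w w_0 d_{w_0}] differ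
    by a central element [varpi^c]. *)

From HB Require Import structures.
From mathcomp Require Import all_boot all_order all_algebra all_fingroup.
From mathcomp Require Import zify.
Set Implicit Arguments.
Unset Strict Implicit.
Unset Printing Implicit Defensive.

Import GRing.Theory.
Local Open Scope ring_scope.

Lemma perm_mx_inj (R : nzRingType) n : injective (@perm_mx R n).
Proof.
move=> s t /matrixP st; apply/permP => i.
have := st i (s i); rewrite /perm_mx !mxE eqxx.
by case: eqP => // _ /eqP; rewrite oner_eq0.
Qed.

Lemma w0permE n (i : 'I_n) : w0perm n i = rev_ord i.
Proof. by rewrite permE. Qed.

Lemma w0permV n : (w0perm n)^-1%g = w0perm n.
Proof.
by apply: (mulgI (w0perm n)); apply/permP => i; rewrite mulgV permM !w0permE rev_ordK perm1.
Qed.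

Lemma perm_mx_diag_conj (R : nzRingType) n (s : 'S_n) (d : 'rV[R]_n) :
  perm_mx s *m diag_mx d *m perm_mx s^-1 = diag_mx (\row_i d 0 (s i)).
Proof.
rewrite -row_permE -col_permE; apply/matrixP => i j.
by rewrite !mxE (inj_eq perm_inj).
Qed.

Section VarpiPow.
Variables (F : fieldType) (varpi : F) (n : nat).

Lemma eq_varpi_pow (k l : 'I_n -> int) : k =1 l -> varpi_pow varpi k = varpi_pow varpi l.
Proof. by move=> kl; congr diag_mx; apply/rowP => i; rewrite !mxE kl. Qed.

Lemma varpi_pow_conj (s : 'S_n) (k : 'I_n -> int) :
  perm_mx s *m varpi_pow varpi k *m perm_mx s^-1 = varpi_pow varpi (k \o s).
Proof. by rewrite perm_mx_diag_conj; congr diag_mx; apply/rowP => i; rewrite !mxE. Qed.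

Lemma varpi_powD (k l : 'I_n -> int) : varpi != 0 ->
  varpi_pow varpi (fun i => k i + l i) = varpi_pow varpi k *m varpi_pow varpi l.
Proof.
by move=> varpi_neq0; rewrite mulmx_diag; congr diag_mx; apply/rowP => i; rewrite !mxE expfzDr.
Qed.

Lemma varpi_pow_cst (c : int) : varpi_pow varpi (fun _ : 'I_n => c) = (varpi ^ c)%:M.
Proof. by rewrite -diag_const_mx; congr diag_mx; apply/rowP => i; rewrite !mxE. Qed.

End VarpiPow.

Lemma is_d_perm_mx (F : fieldType) (varpi : F) n (s : 'S_n) (D : 'M[F]_n) :
  is_d varpi (perm_mx s) D -> exists2 k, D = varpi_pow varpi k & is_d_exponent s k.
Proof. by case=> t [/perm_mx_inj <- [k [-> hk]]]; exists k. Qed.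

Lemma d_exponent_succ n (s : 'S_n) (k : 'I_n -> int) (i j : 'I_n) :
  is_d_exponent s k -> j = i.+1 :> nat -> k i - k j = - ((s j < s i)%N : nat)%:Z.
Proof.
case=> _ /(_ i j) hk ij; have [pos neg] := hk ij.
rewrite /inv_root_pos /inv_root_neg /pair_root in pos neg.
case: ltngtP pos neg => [lt_ij pos _ | lt_ji _ neg | /val_inj/perm_inj eq_ij].
- by rewrite pos.
- by rewrite neg.
- by move: ij; rewrite eq_ij; lia.
Qed.

Lemma ord_succ_const (T : Type) n (f : 'I_n -> T) :
  (forall i j : 'I_n, j = i.+1 :> nat -> f i = f j) -> forall i j, f i = f j.
Proof.
move=> f_succ.
have f_base m (lt_mn : (m < n)%N) (i : 'I_n) : (i <= m)%N -> f i = f (Ordinal lt_mn).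
  elim: m lt_mn => [|m IHm] lt_mn le_im; first by congr f; apply: val_inj => /=; lia.
  have lt_m_n : (m < n)%N by lia.
  move: le_im; rewrite leq_eqVlt => /orP[/eqP eq_im | lt_im].
    by congr f; apply: val_inj.
  by rewrite (IHm lt_m_n) //; apply: f_succ.
have f_le (i j : 'I_n) : (i <= j)%N -> f i = f j.
  by move=> le_ij; rewrite (f_base _ (ltn_ord j) _ le_ij); congr f; apply: val_inj.
by move=> i j; case: (leqP i j) => [/f_le | /ltnW/f_le ->].
Qed.

Lemma d_exponent_w0_mul n (w : 'S_n) (k1 k2 k3 : 'I_n -> int) :
  is_d_exponent (w0perm n * w) k1 -> is_d_exponent w k2 ->
  is_d_exponent (w0perm n) k3 ->
  exists c : int, forall i, k1 i = k2 (w0perm n i) + k3 i + c.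
Proof.
move=> hk1 hk2 hk3.
pose e (i : 'I_n) : int := k1 i - k2 (w0perm n i) - k3 i.
have e_succ (i j : 'I_n) : j = i.+1 :> nat -> e i = e j.
  move=> ij; have lt_jn := ltn_ord j.
  have w0ij : w0perm n i = (w0perm n j).+1 :> nat by rewrite !w0permE /=; lia.
  have := d_exponent_succ hk3 ij; rewrite w0ij ltnSn.
  have := d_exponent_succ hk2 w0ij; have := d_exponent_succ hk1 ij.
  rewrite /e !permM.
  have ne_ij : w (w0perm n i) != w (w0perm n j) :> nat.
    by rewrite val_eqE !(inj_eq perm_inj); apply/eqP => eq_ij; move: ij; rewrite eq_ij; lia.
  by case: ltngtP ne_ij => //= _ _; lia.
have [n0 | n_gt0] := posnP n.
  by exists 0 => i; have := ltn_ord i; lia.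
exists (e (Ordinal n_gt0)) => i; rewrite -(ord_succ_const e_succ i) /e; lia.
Qed.

Theorem mainTheorem12 (F : fieldType) (varpi : F) (n : nat)
  (Hvarpi : varpi != 0) (w : 'S_n) (Dw0w Dw Dw0 : 'M[F]_n) :
  let W0 := perm_mx (w0perm n) : 'M[F]_n in
  let W := perm_mx w : 'M[F]_n in
  is_d varpi (W0 *m W) Dw0w ->
  is_d varpi W Dw ->
  is_d varpi W0 Dw0 ->
  exists z : F, z != 0 /\ Dw0w = W0 *m Dw *m W0 *m Dw0 *m z%:M.
Proof.
move=> W0 W; rewrite {}/W0 {}/W -perm_mxM.
move=> /is_d_perm_mx[k1 -> hk1] /is_d_perm_mx[k2 -> hk2] /is_d_perm_mx[k3 -> hk3].
have [c k1E] := d_exponent_w0_mul hk1 hk2 hk3.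
exists (varpi ^ c); split; first by rewrite expfz_eq0 negb_and Hvarpi orbT.
have w0_conj := varpi_pow_conj varpi (w0perm n) k2; rewrite w0permV in w0_conj.
rewrite w0_conj -varpi_pow_cst -!varpi_powD //.
exact: eq_varpi_pow.
Qed.
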